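(* For integers $n\ge 10$ and $1\le j\le n$ let $$A_j=\Big(\frac{n!}{(n-j)!}\Big)^2\frac{1}{j!}\exp\Big\{-2j\log n\Big(1-\frac jn\Big)-2j\Big\}.$$ Then $\sum_{j=1}^{\lfloor n/4\rfloor}A_j\le 2/3$ and $\sum_{j\in\mathbb Z,\ n/4\le j\le n/2}A_j\le 1/4$.
   Context: $\log$ denotes the natural logarithm. *)

From Stdlib Require Import Reals Lra Lia Arith List.
Open Scope R_scope.

Definition A (n j : nat) : R :=
  (INR (fact n) / INR (fact (n - j))) ^ 2 * / INR (fact j) *
  exp (- 2 * INR j * ln (INR n) * (1 - INR j / INR n) - 2 * INR j).

(* Sum of f j over the integers j in [a, b] (empty if b < a). *)
Definition sum_range (a b : nat) (f : nat -> R) : R :=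
  fold_right Rplus 0 (map f (seq a (S b - a))).

From Stdlib Require Import Reals Lra Lia Arith List.
Open Scope R_scope.

(* First range, 1 <= j <= n/4.  The ratio A n (j+1) / A n j equals
   (n-j)^2/(j+1) * n^{-2 + 2(2j+1)/n} e^{-2}; since ln m / m decreases for
   m >= 3, n^{(4j+2)/n} <= M^{(4j+2)/M} <= M for M = 4(j+1) <= n, so the
   ratio is at most 4 e^{-2}.  With A n 1 = n^{2/n} e^{-2} <= 1.6 e^{-2} the
   sum is dominated by a geometric series of value <= 1.6 w / (1 - 4 w) with
   w = e^{-2} <= 0.15, i.e. by 2/3.

   Second range, n/4 <= j <= n/2.  Bounding n!/(n-j)! <= n^j e^{-j(j-1)/(2n)}
   and j! >= e^{j ln j - j + 1} reduces A n j <= e^{-1} e^{-j/2} to a scalar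
   inequality in x = j/n in [1/4, 1/2]; summing from j >= 3 gives at most
   q^5 / (1 - q) <= 1/4 with q = e^{-1/2} <= 0.62. *)

Lemma exp_nat_mul (k : nat) (y : R) : exp (INR k * y) = exp y ^ k.
Proof.
  induction k as [|k IH].
  - simpl. rewrite Rmult_0_l, exp_0. reflexivity.
  - rewrite S_INR, Rmult_plus_distr_r, Rmult_1_l, exp_plus, IH. simpl. ring.
Qed.

(** Compound-interest lower bound: [(1 + y)^k <= exp (k y)], from [1 + y <= exp y]. *)
Lemma pow_le_exp (k : nat) (y : R) : 0 <= 1 + y -> (1 + y) ^ k <= exp (INR k * y).
Proof.
  intro Hy. rewrite exp_nat_mul. apply pow_incr. split; [exact Hy | apply exp_ineq1_le].
Qed.

Lemma exp_le_compat (x y : R) : x <= y -> exp x <= exp y.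
Proof.
  intro Hxy. destruct (Rle_lt_or_eq_dec _ _ Hxy) as [Hlt | ->].
  - left. apply exp_increasing. exact Hlt.
  - right. reflexivity.
Qed.

Lemma ln_le_compat (x y : R) : 0 < x -> x <= y -> ln x <= ln y.
Proof.
  intros Hx Hxy. destruct (Rle_lt_or_eq_dec _ _ Hxy) as [Hlt | ->].
  - left. apply ln_increasing; assumption.
  - right. reflexivity.
Qed.

Lemma ln_le_sub_one (y : R) : 0 < y -> ln y <= y - 1.
Proof.
  intro Hy. pose proof (exp_ineq1_le (ln y)) as H. rewrite exp_ln in H; lra.
Qed.

(** The same bound applied to [/ y]. *)
Lemma one_sub_inv_le_ln (y : R) : 0 < y -> 1 - / y <= ln y.
Proof.
  intro Hy. pose proof (ln_le_sub_one (/ y) (Rinv_0_lt_compat _ Hy)) as H.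
  rewrite ln_Rinv in H by exact Hy. lra.
Qed.

Lemma ln_succ_sub_le (m : R) : 0 < m -> ln (m + 1) - ln m <= / m.
Proof.
  intro Hm.
  replace (m + 1) with (m * (1 + / m)) by (field; lra).
  assert (Hinv : 0 < / m) by (apply Rinv_0_lt_compat; exact Hm).
  rewrite ln_mult by lra.
  pose proof (ln_le_sub_one (1 + / m)). lra.
Qed.

Lemma div_le_of_le_mul (a b d : R) : 0 < d -> a <= b * d -> a / d <= b.
Proof.
  intros Hd H. apply Rmult_le_reg_r with d; [exact Hd |].
  unfold Rdiv. rewrite Rmult_assoc, Rinv_l by lra. lra.
Qed.

(** [e >= (17/16)^16 >= 2.63]. *)
Lemma exp_1_ge : 263 / 100 <= exp 1.
Proof.
  replace (exp 1) with (exp (INR 16 * (1 / 16))) by (f_equal; simpl; field).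
  eapply Rle_trans; [| apply pow_le_exp; lra]. simpl. lra.
Qed.

(** [e^{1.4} >= (1.014)^100 >= 4], i.e. [ln 4 <= 1.4]. *)
Lemma ln_4_le : ln 4 <= 14 / 10.
Proof.
  rewrite <- (ln_exp (14 / 10)). apply ln_le_compat; [lra |].
  replace (14 / 10) with (INR 100 * (14 / 1000)) by (simpl; field).
  eapply Rle_trans; [| apply pow_le_exp; lra]. simpl. lra.
Qed.

(** [exp (-2) <= 3/20], since [e^2 >= 2.63^2]. *)
Lemma exp_m2_le : exp (-2) <= 3 / 20.
Proof.
  pose proof exp_1_ge as He.
  assert (Hsq : exp (-2) * exp 1 ^ 2 = 1).
  { rewrite <- (exp_nat_mul 2), <- exp_plus. simpl INR.
    replace (-2 + (1 + 1) * 1) with 0 by ring. apply exp_0. }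
  pose proof (exp_pos (-2)). simpl in Hsq. nra.
Qed.

(** [exp (-1/2) <= 0.62], since [exp (-1/2)^2 = 1/e <= 1/2.63]. *)
Lemma exp_mhalf_le : exp (- (1 / 2)) <= 31 / 50.
Proof.
  pose proof exp_1_ge as He.
  assert (Hsq : exp (- (1 / 2)) ^ 2 * exp 1 = 1).
  { rewrite <- exp_nat_mul, <- exp_plus. simpl INR.
    replace ((1 + 1) * - (1 / 2) + 1) with 0 by field. apply exp_0. }
  pose proof (exp_pos (- (1 / 2))). simpl in Hsq. nra.
Qed.

(** [ln y >= 2] as soon as [y >= 10 >= e^2]. *)
Lemma ln_ge_2 (y : R) : 10 <= y -> 2 <= ln y.
Proof.
  intro Hy. rewrite <- (ln_exp 2). apply ln_le_compat; [apply exp_pos |].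
  replace 2 with (INR 2 * 1) by (simpl; ring). rewrite exp_nat_mul.
  pose proof exp_le_3. pose proof (exp_pos 1). simpl. nra.
Qed.

(** [ln 10 / 5 <= ln 1.6], because [1.6^5 >= 10]. *)
Lemma ln_10_div_5_le : ln 10 / 5 <= ln (16 / 10).
Proof.
  assert (H : ln 10 <= INR 5 * ln (16 / 10)).
  { rewrite <- ln_pow by lra. apply ln_le_compat; [lra | simpl; lra]. }
  simpl in H. lra.
Qed.

(** [ln m / m] decreases over a unit step once [ln m >= 1], since
    [m (ln (m+1) - ln m) <= 1]. *)
Lemma ln_div_step (m : R) : 3 <= m -> ln (m + 1) / (m + 1) <= ln m / m.
Proof.
  intro Hm.
  assert (Hln : 1 <= ln m).
  { rewrite <- (ln_exp 1). apply ln_le_compat; [apply exp_pos |].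
    pose proof exp_le_3. lra. }
  pose proof (ln_succ_sub_le m ltac:(lra)) as Hstep.
  assert (Hmul : m * (ln (m + 1) - ln m) <= 1).
  { apply Rle_trans with (m * / m); [apply Rmult_le_compat_l; lra | right; field; lra]. }
  apply Rmult_le_reg_r with (m * (m + 1)); [nra |].
  replace (ln (m + 1) / (m + 1) * (m * (m + 1))) with (m * ln (m + 1)) by (field; lra).
  replace (ln m / m * (m * (m + 1))) with ((m + 1) * ln m) by (field; lra).
  lra.
Qed.

Lemma ln_div_antitone (M n : nat) : (3 <= M)%nat -> (M <= n)%nat ->
  ln (INR n) / INR n <= ln (INR M) / INR M.
Proof.
  intros HM Hn. induction Hn as [| n Hn IH]; [lra |].
  rewrite S_INR. eapply Rle_trans; [apply ln_div_step | exact IH].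
  apply (le_INR 3) in HM. apply (le_INR M) in Hn. simpl in HM. lra.
Qed.

Lemma fact_pos_R (k : nat) : 0 < INR (fact k).
Proof. apply lt_0_INR, lt_O_fact. Qed.

(** Stirling-type lower bound [j! >= exp (j ln j - j + 1)], by induction using
    [j (ln (j+1) - ln j) <= 1]. *)
Lemma fact_ge_exp (j : nat) : (1 <= j)%nat ->
  exp (INR j * ln (INR j) - INR j + 1) <= INR (fact j).
Proof.
  intro Hj. induction Hj as [| j Hj IH].
  - simpl. rewrite ln_1, <- exp_0. right. f_equal. ring.
  - apply (le_INR 1) in Hj. simpl in Hj.
    change (fact (S j)) with (S j * fact j)%nat. rewrite mult_INR, S_INR.
    assert (Hstep : INR j * ln (INR j + 1) <= INR j * ln (INR j) + 1).
    { pose proof (ln_succ_sub_le (INR j) ltac:(lra)) as H.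
      assert (Hmul : INR j * (ln (INR j + 1) - ln (INR j)) <= INR j * / INR j)
        by (apply Rmult_le_compat_l; lra).
      rewrite Rinv_r in Hmul by lra. lra. }
    replace ((INR j + 1) * ln (INR j + 1) - (INR j + 1) + 1)
      with (ln (INR j + 1) + (INR j * ln (INR j + 1) - INR j)) by ring.
    rewrite exp_plus, exp_ln by lra.
    apply Rmult_le_compat_l; [lra |].
    eapply Rle_trans; [| exact IH]. apply exp_le_compat. lra.
Qed.

Definition falling (n j : nat) : R := INR (fact n) / INR (fact (n - j)).

Lemma falling_nonneg (n j : nat) : 0 <= falling n j.
Proof.
  unfold falling. pose proof (fact_pos_R n). pose proof (fact_pos_R (n - j)).
  left. apply Rdiv_lt_0_compat; lra.
Qed.

Lemma falling_succ (n j : nat) : (S j <= n)%nat ->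
  falling n (S j) = falling n j * INR (n - j).
Proof.
  intro H. unfold falling.
  replace (n - j)%nat with (S (n - S j)) by lia.
  change (fact (S (n - S j))) with (S (n - S j) * fact (n - S j))%nat.
  rewrite mult_INR. pose proof (fact_pos_R (n - S j)).
  assert (0 < INR (S (n - S j))) by (apply lt_0_INR; lia).
  field. lra.
Qed.

(** Upper bound [n!/(n-j)! <= n^j exp (-j(j-1)/(2n))], from
    [n - i <= n exp (-i/n)] for each factor. *)
Lemma falling_le_exp (n j : nat) : (0 < n)%nat -> (j <= n)%nat ->
  falling n j <= exp (INR j * ln (INR n) - INR j * (INR j - 1) / (2 * INR n)).
Proof.
  intro Hn. apply lt_0_INR in Hn.
  induction j as [| j IH]; intro Hj.
  - unfold falling. rewrite Nat.sub_0_r. pose proof (fact_pos_R n).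
    replace (INR 0 * ln (INR n) - INR 0 * (INR 0 - 1) / (2 * INR n)) with 0
      by (simpl; field; lra).
    rewrite exp_0. right. field. lra.
  - apply le_INR in Hj as HjR. rewrite S_INR in HjR.
    assert (Hsub : INR (n - j) = INR n - INR j) by (apply minus_INR; lia).
    assert (Hfactor : INR (n - j) <= exp (ln (INR n) - INR j / INR n)).
    { pose proof (exp_ineq1_le (- (INR j / INR n))).
      unfold Rminus. rewrite exp_plus, exp_ln by lra.
      rewrite Hsub.
      replace (INR n - INR j) with (INR n * (1 + - (INR j / INR n))) by (field; lra).
      apply Rmult_le_compat_l; lra. }
    rewrite falling_succ by exact Hj.
    eapply Rle_trans.
    { apply Rmult_le_compat; [apply falling_nonneg | apply pos_INR | apply IH; lia | exact Hfactor]. }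
    rewrite <- exp_plus. apply exp_le_compat. rewrite S_INR. right. field. lra.
Qed.

Lemma A_nonneg (n j : nat) : 0 <= A n j.
Proof.
  unfold A. pose proof (fact_pos_R j).
  apply Rmult_le_pos; [apply Rmult_le_pos | left; apply exp_pos].
  - apply pow2_ge_0.
  - left. apply Rinv_0_lt_compat. exact H.
Qed.

Definition A_ratio (n j : nat) : R :=
  INR (n - j) ^ 2 / INR (S j) *
  exp (- 2 * ln (INR n) * (1 - (2 * INR j + 1) / INR n) - 2).

Lemma A_succ (n j : nat) : (S j <= n)%nat -> A n (S j) = A n j * A_ratio n j.
Proof.
  intro H. assert (HN : 0 < INR n) by (apply lt_0_INR; lia).
  unfold A, A_ratio.
  change (INR (fact n) / INR (fact (n - S j))) with (falling n (S j)).
  change (INR (fact n) / INR (fact (n - j))) with (falling n j).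
  rewrite falling_succ by exact H.
  replace (- 2 * INR (S j) * ln (INR n) * (1 - INR (S j) / INR n) - 2 * INR (S j))
    with ((- 2 * INR j * ln (INR n) * (1 - INR j / INR n) - 2 * INR j) +
          (- 2 * ln (INR n) * (1 - (2 * INR j + 1) / INR n) - 2))
    by (rewrite S_INR; field; lra).
  rewrite exp_plus.
  change (fact (S j)) with (S j * fact j)%nat. rewrite mult_INR.
  pose proof (fact_pos_R j). assert (0 < INR (S j)) by (apply lt_0_INR; lia).
  field. lra.
Qed.

Lemma A_one (n : nat) : (0 < n)%nat -> A n 1 = exp (2 * ln (INR n) / INR n - 2).
Proof.
  intro Hn. assert (HN : 0 < INR n) by (apply lt_0_INR; lia).
  rewrite A_succ by lia.
  assert (HA0 : A n 0 = 1).
  { unfold A. rewrite Nat.sub_0_r. pose proof (fact_pos_R n). simpl INR.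
    replace (- 2 * 0 * ln (INR n) * (1 - 0 / INR n) - 2 * 0) with 0 by (field; lra).
    rewrite exp_0. simpl. field. lra. }
  rewrite HA0, Rmult_1_l. unfold A_ratio. rewrite Nat.sub_0_r.
  rewrite <- (exp_ln (INR n)) at 1 by exact HN.
  rewrite <- exp_nat_mul. simpl INR. rewrite Rdiv_1_r, <- exp_plus.
  f_equal. field. lra.
Qed.

(** For [n >= 10], [A n 1 <= 1.6 e^{-2}], since [n^{2/n} <= 10^{1/5} <= 1.6]. *)
Lemma A_one_le (n : nat) : (10 <= n)%nat -> A n 1 <= 16 / 10 * exp (-2).
Proof.
  intro Hn. rewrite A_one by lia.
  pose proof (ln_div_antitone 10 n ltac:(lia) Hn) as Hdec.
  replace (INR 10) with 10 in Hdec by (simpl; ring).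
  pose proof ln_10_div_5_le.
  replace (16 / 10 * exp (-2)) with (exp (ln (16 / 10) + -2))
    by (rewrite exp_plus, exp_ln by lra; reflexivity).
  apply exp_le_compat.
  replace (2 * ln (INR n) / INR n) with (2 * (ln (INR n) / INR n)) by (unfold Rdiv; ring).
  lra.
Qed.

(** While [4 (j+1) <= n] the ratio is at most [4 e^{-2}]: bound [(n-j)^2 <= n^2]
    and [n^{(4j+2)/n} <= M^{(4j+2)/M} <= M] for [M = 4 (j+1) <= n]. *)
Lemma A_ratio_le (n j : nat) : (4 * S j <= n)%nat -> A_ratio n j <= 4 * exp (-2).
Proof.
  intro H.
  set (M := (4 * S j)%nat).
  assert (HMR : INR M = 4 * (INR j + 1)).
  { unfold M. rewrite mult_INR, (S_INR j). replace (INR 4) with 4 by (simpl; ring). reflexivity. }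
  pose proof (pos_INR j) as Hj.
  assert (HMn : INR M <= INR n) by (apply le_INR; exact H).
  set (L := ln (INR n)).
  assert (HlnM : 0 <= ln (INR M)) by (rewrite <- ln_1; apply ln_le_compat; lra).
  assert (Hkey : (4 * INR j + 2) * L / INR n <= ln (INR M)).
  { pose proof (ln_div_antitone M n ltac:(unfold M; lia) H) as Hdec. fold L in Hdec.
    apply Rle_trans with ((4 * INR j + 2) * (ln (INR M) / INR M)).
    - unfold Rdiv in *. rewrite Rmult_assoc. apply Rmult_le_compat_l; lra.
    - apply Rle_trans with (INR M * (ln (INR M) / INR M)).
      + apply Rmult_le_compat_r; [| lra].
        unfold Rdiv. apply Rmult_le_pos; [lra | left; apply Rinv_0_lt_compat; lra].
      + right. field. lra. }
  assert (Hsq : INR (n - j) ^ 2 <= exp (2 * L)).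
  { replace (2 * L) with (INR 2 * L) by (simpl; ring).
    rewrite exp_nat_mul. unfold L. rewrite exp_ln by lra.
    apply pow_incr. rewrite minus_INR by lia. lra. }
  assert (HS : 0 < INR (S j)) by (rewrite S_INR; lra).
  set (E := exp (- 2 * L * (1 - (2 * INR j + 1) / INR n) - 2)).
  assert (HE : exp (2 * L) * E = exp ((4 * INR j + 2) * L / INR n) * exp (-2)).
  { unfold E. rewrite <- !exp_plus. f_equal. field. lra. }
  unfold A_ratio. fold L. fold E.
  apply Rle_trans with (exp (2 * L) * E / INR (S j)).
  { unfold Rdiv. rewrite (Rmult_comm (exp (2 * L)) E), (Rmult_comm _ E), Rmult_assoc.
    apply Rmult_le_compat_l; [left; apply exp_pos |].
    apply Rmult_le_compat_r; [left; apply Rinv_0_lt_compat; lra | exact Hsq]. }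
  rewrite HE.
  apply Rle_trans with (INR M * exp (-2) / INR (S j)).
  { apply Rmult_le_compat_r; [left; apply Rinv_0_lt_compat; lra |].
    apply Rmult_le_compat_r; [left; apply exp_pos |].
    rewrite <- (exp_ln (INR M)) by lra. apply exp_le_compat. exact Hkey. }
  rewrite HMR, S_INR. right. field. lra.
Qed.

Lemma A_le_low (n j : nat) : (1 <= j)%nat -> (4 * j <= n)%nat ->
  A n j <= A n 1 * (4 * exp (-2)) ^ (j - 1).
Proof.
  intro Hj. induction Hj as [| j Hj IH]; intro Hjn.
  - simpl. lra.
  - rewrite A_succ by lia.
    replace (S j - 1)%nat with (S (j - 1)) by lia. rewrite <- tech_pow_Rmult.
    assert (Hratio : 0 <= A_ratio n j).
    { unfold A_ratio. apply Rmult_le_pos; [| left; apply exp_pos].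
      unfold Rdiv. apply Rmult_le_pos; [apply pow2_ge_0 |].
      left. apply Rinv_0_lt_compat, lt_0_INR. lia. }
    apply Rle_trans with (A n 1 * (4 * exp (-2)) ^ (j - 1) * (4 * exp (-2))).
    + apply Rmult_le_compat; [apply A_nonneg | exact Hratio | apply IH; lia |].
      apply A_ratio_le. lia.
    + right. ring.
Qed.

(** The scalar inequality behind the range [n/4 <= j <= n/2]: with [x = j/n],
    [L = ln n >= 2] and [eps = 1/n <= 1/10], the normalized exponent of [A n j]
    is non-positive.  It follows from [ln (4x) >= 1 - 1/(4x)], [ln 4 <= 1.4]
    and [(2x - 1)(6x - 1) <= 0]. *)
Lemma high_exponent_nonpos (x L eps : R) :
  1 / 4 <= x <= 1 / 2 -> 2 <= L -> eps <= 1 / 10 ->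
  (2 * x - 1) * L - x + eps - ln x - 1 / 2 <= 0.
Proof.
  intros Hx HL Heps.
  set (y := / (4 * x)).
  assert (Hxy : 4 * x * y = 1) by (unfold y; field; lra).
  assert (Hlnx : 1 - y - 14 / 10 <= ln x).
  { pose proof (one_sub_inv_le_ln (4 * x) ltac:(lra)) as H.
    rewrite ln_mult in H by lra. pose proof ln_4_le. fold y in H. lra. }
  assert (HxL : (2 * x - 1) * L <= (2 * x - 1) * 2) by nra.
  assert (Hquad : 3 * x + y <= 2) by nra.
  lra.
Qed.

(** Logarithmic upper bound for a single term, valid for all [1 <= j <= n]:
    insert the falling-factorial upper bound and the Stirling-type lower bound
    for [j!] into the definition of [A]. *)
Lemma A_le_exp (n j : nat) : (1 <= j)%nat -> (j <= n)%nat ->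
  A n j <= exp (2 * (INR j * ln (INR n) - INR j * (INR j - 1) / (2 * INR n))
                - (INR j * ln (INR j) - INR j + 1)
                + (- 2 * INR j * ln (INR n) * (1 - INR j / INR n) - 2 * INR j)).
Proof.
  intros Hj Hjn.
  pose proof (falling_le_exp n j ltac:(lia) Hjn) as HF.
  pose proof (fact_ge_exp j Hj) as HZ.
  set (Y := INR j * ln (INR n) - INR j * (INR j - 1) / (2 * INR n)) in *.
  set (Z := INR j * ln (INR j) - INR j + 1) in *.
  set (X := - 2 * INR j * ln (INR n) * (1 - INR j / INR n) - 2 * INR j).
  replace (exp (2 * Y - Z + X)) with (exp Y ^ 2 * / exp Z * exp X)
    by (rewrite <- exp_Ropp, <- (exp_nat_mul 2), <- !exp_plus; f_equal; simpl; ring).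
  unfold A. change (INR (fact n) / INR (fact (n - j))) with (falling n j). fold X.
  apply Rmult_le_compat_r; [left; apply exp_pos |].
  apply Rmult_le_compat.
  - apply pow2_ge_0.
  - left. apply Rinv_0_lt_compat, fact_pos_R.
  - apply pow_incr. split; [apply falling_nonneg | exact HF].
  - apply Rinv_le_contravar; [apply exp_pos | exact HZ].
Qed.

(** On [n/4 <= j <= n/2] the terms are bounded by [e^{-1} e^{-j/2}]: by
    [A_le_exp] the claim reduces to [j] times the scalar inequality
    [high_exponent_nonpos] at [x = j/n], [L = ln n], [eps = 1/n]. *)
Lemma A_le_high (n j : nat) : (10 <= n)%nat -> (1 <= j)%nat ->
  (n <= 4 * j)%nat -> (2 * j <= n)%nat ->
  A n j <= exp (-1) * exp (- (1 / 2)) ^ j.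
Proof.
  intros Hn Hj1 H4 H2.
  eapply Rle_trans; [apply A_le_exp; lia |].
  rewrite <- (exp_nat_mul j), <- exp_plus. apply exp_le_compat.
  apply le_INR in Hn, Hj1, H4, H2. rewrite mult_INR in H4, H2.
  replace (INR 10) with 10 in Hn by (simpl; ring).
  replace (INR 4) with 4 in H4 by (simpl; ring).
  replace (INR 2) with 2 in H2 by (simpl; ring).
  set (nR := INR n) in *. set (jR := INR j) in *. set (L := ln nR) in *.
  set (x := jR / nR).
  assert (Hx : 1 / 4 <= x <= 1 / 2).
  { unfold x. split; apply Rmult_le_reg_r with nR; try lra;
      replace (jR / nR * nR) with jR by (field; lra); lra. }
  assert (Heps : / nR <= 1 / 10) by (apply Rle_trans with (/ 10); [apply Rinv_le_contravar |]; lra).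
  pose proof (high_exponent_nonpos x L (/ nR) Hx (ln_ge_2 nR Hn) Heps) as Hkey.
  assert (Hlnj : ln jR = ln x + L).
  { unfold x, Rdiv, L. rewrite ln_mult, ln_Rinv; try lra. apply Rinv_0_lt_compat. lra. }
  rewrite Hlnj.
  assert (Hprod : 0 <= jR * - ((2 * x - 1) * L - x + / nR - ln x - 1 / 2))
    by (apply Rmult_le_pos; lra).
  apply Rminus_le.
  match goal with |- ?a - ?b <= 0 =>
    replace (a - b) with (- (jR * - ((2 * x - 1) * L - x + / nR - ln x - 1 / 2)))
      by (unfold x; field; lra) end.
  lra.
Qed.

Lemma geometric_sum_le (f : nat -> R) (q : R) (len : nat) : 0 <= q < 1 ->
  forall (a : nat) (c : R), 0 <= c ->
  (forall j, (a <= j < a + len)%nat -> f j <= c * q ^ (j - a)) ->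
  fold_right Rplus 0 (map f (seq a len)) <= c / (1 - q).
Proof.
  intro Hq. induction len as [| len IH]; intros a c Hc Hf; simpl.
  - apply Rmult_le_pos; [exact Hc | left; apply Rinv_0_lt_compat; lra].
  - assert (Hhead : f a <= c) by (specialize (Hf a ltac:(lia)); rewrite Nat.sub_diag in Hf; simpl in Hf; lra).
    assert (Htail : fold_right Rplus 0 (map f (seq (S a) len)) <= c * q / (1 - q)).
    { apply IH; [apply Rmult_le_pos; lra |]. intros j Hj.
      specialize (Hf j ltac:(lia)).
      replace (j - a)%nat with (S (j - S a)) in Hf by lia.
      simpl in Hf. rewrite Rmult_assoc. exact Hf. }
    apply Rle_trans with (c + c * q / (1 - q)); [lra |]. right. field. lra.
Qed.

Lemma sum_range_geometric (f : nat -> R) (c q : R) (a b : nat) :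
  0 <= q < 1 -> 0 <= c ->
  (forall j, (a <= j <= b)%nat -> f j <= c * q ^ (j - a)) ->
  sum_range a b f <= c / (1 - q).
Proof.
  intros Hq Hc Hf. apply geometric_sum_le; [exact Hq | exact Hc |].
  intros j Hj. apply Hf. lia.
Qed.

(** First range: a geometric series with first term [A n 1 <= 1.6 e^{-2}] and
    ratio [4 e^{-2}], so the sum is at most [1.6 w / (1 - 4 w) <= 2/3], [w = e^{-2} <= 0.15]. *)
Lemma sum_low_le (n : nat) : (10 <= n)%nat -> sum_range 1 (Nat.div n 4) (A n) <= 2 / 3.
Proof.
  intro Hn.
  pose proof exp_m2_le as Hw. pose proof (exp_pos (-2)) as Hw0.
  pose proof (Nat.Div0.mul_div_le n 4) as Hdiv.
  apply Rle_trans with (A n 1 / (1 - 4 * exp (-2))).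
  - apply sum_range_geometric; [lra | apply A_nonneg |].
    intros j Hj. apply A_le_low; lia.
  - apply div_le_of_le_mul; [lra |].
    pose proof (A_one_le n Hn). lra.
Qed.

(** Second range: starting at [a = ceil (n/4) >= 3], the terms are bounded by
    [e^{-1} q^j] with [q = e^{-1/2} <= 0.62], so the sum is at most
    [q^5 / (1 - q) <= 1/4]. *)
Lemma sum_high_le (n : nat) : (10 <= n)%nat ->
  sum_range (Nat.div (n + 3) 4) (Nat.div n 2) (A n) <= 1 / 4.
Proof.
  intro Hn.
  set (a := Nat.div (n + 3) 4). set (q := exp (- (1 / 2))).
  assert (Ha : (n <= 4 * a /\ 3 <= a)%nat).
  { pose proof (Nat.div_mod (n + 3) 4 ltac:(lia)). pose proof (Nat.mod_upper_bound (n + 3) 4 ltac:(lia)).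
    unfold a. lia. }
  pose proof (Nat.Div0.mul_div_le n 2) as Hdiv.
  pose proof exp_mhalf_le as Hq. pose proof (exp_pos (- (1 / 2))) as Hq0. fold q in Hq, Hq0.
  assert (He1 : exp (-1) = q ^ 2).
  { unfold q. rewrite <- exp_nat_mul. f_equal. simpl. field. }
  apply Rle_trans with (q ^ 2 * q ^ a / (1 - q)).
  - apply sum_range_geometric; [lra | apply Rmult_le_pos; apply pow_le; lra |].
    intros j Hj. rewrite <- He1. eapply Rle_trans; [apply A_le_high; lia |].
    fold q. replace j with (a + (j - a))%nat at 1 by lia. rewrite pow_add. right. ring.
  - apply div_le_of_le_mul; [lra |].
    replace a with (3 + (a - 3))%nat by lia. rewrite pow_add.
    assert (Htail : q ^ (a - 3) <= 1) by (rewrite <- (pow1 (a - 3)); apply pow_incr; lra).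
    pose proof (pow_le q (a - 3) ltac:(lra)).
    assert (Hq5 : q ^ 5 <= (31 / 50) ^ 5) by (apply pow_incr; lra).
    simpl in *. nra.
Qed.

Theorem lemma4p7 (n : nat) (hn : (10 <= n)%nat) :
  sum_range 1 (Nat.div n 4) (A n) <= 2 / 3 /\
  sum_range (Nat.div (n + 3) 4) (Nat.div n 2) (A n) <= 1 / 4.
Proof.
  split; [apply sum_low_le | apply sum_high_le]; exact hn.
Qed.
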